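(* Let $k>d\ge1$ be integers, $G$ a finite abelian group, $A\subseteq G$, $\delta=|A|/|G|$, and let $F$ be any $(d+1)$-simple $k$-uniform hypergraph. Then $$\big|t(F,\Gamma^{(k)}_A)-\delta^{e(F)}\big|\le e(F)\,\|\Gamma^{(d+1)}_A-\delta\|_{\square^{d+1}_d}\le e(F)\,\|A-\delta\|_{U^{d+1}}.$$
   Context: $\Gamma^{(m)}_A:G^m\to\{0,1\}$ is $\Gamma^{(m)}_A(x_1,\dots,x_m)=A(x_1+\dots+x_m)$ (sets identified with indicator functions). For a $k$-uniform hypergraph $F$ whose edges are $k$-element subsets of $V(F)$, $t(F,\Gamma^{(k)}_A)=\mathbb{E}_{\mathbf{x}\in G^{V(F)}}\prod_{e\in E(F)}A(\sum_{v\in e}x_v)$. $F$ is $(d+1)$-simple if each edge $e$ contains a set of $d+1$ vertices not contained in any other edge. For $g:G^{d+1}\to\mathbb{R}$, $\|g\|_{\square^{d+1}_d}=\max|\mathbb{E}_{\mathbf{x}\in G^{d+1}}[g(\mathbf{x})\prod_{B\in\binom{[d+1]}{d}}S_B(\mathbf{x}_B)]|$ over subsets $S_B\subseteq G^B$. $\|f\|_{U^{m}}=\big(\mathbb{E}_{x,h_1,\dots,h_m}\prod_{\omega\in\{0,1\}^m}f(x+\sum_i\omega_ih_i)\big)^{1/2^m}$. *)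

From HB Require Import structures.
From mathcomp Require Import all_boot all_order all_algebra.
Set Implicit Arguments. Unset Strict Implicit. Unset Printing Implicit Defensive.
Import Order.TTheory GRing.Theory Num.Theory.
Local Open Scope ring_scope.

Definition avg (R : rcfType) (T : finType) (f : T -> R) : R :=
  (\sum_(x : T) f x) / #|T|%:R.

Definition ind (R : rcfType) (G : finZmodType) (A : {set G}) (g : G) : R :=
  (g \in A)%:R.

Definition density (R : rcfType) (G : finZmodType) (A : {set G}) : R :=
  #|A|%:R / #|G|%:R.

Definition Gamma (R : rcfType) (G : finZmodType) (m : nat) (A : {set G})
  (x : {ffun 'I_m -> G}) : R := ind R A (\sum_(i < m) x i).

Definition uniform (V : finType) (k : nat) (E : {set {set V}}) : Prop :=
  forall e, e \in E -> #|e| = k.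

Definition simple (V : finType) (s : nat) (E : {set {set V}}) : Prop :=
  forall e, e \in E -> exists S : {set V},
    [/\ S \subset e, #|S| = s &
        forall e', e' \in E -> e' != e -> ~~ (S \subset e')].

Definition hom_density (R : rcfType) (G : finZmodType) (V : finType)
  (E : {set {set V}}) (A : {set G}) : R :=
  avg (fun x : {ffun V -> G} => \prod_(e in E) ind R A (\sum_(v in e) x v)).

(* restriction x_B of x in G^(d+1) to B = [d+1] \ {j}, identified with G^d
   via lift j *)
Definition face (G : finZmodType) (d : nat) (j : 'I_d.+1)
  (x : {ffun 'I_d.+1 -> G}) : {ffun 'I_d -> G} := [ffun i => x (lift j i)].

(* ||g||_{square^{d+1}_d} : maximum over families (S_B)_{B in binom([d+1],d)},
   S_B subset of G^B, the d-subset B being indexed by its missing element j *)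
Definition box_norm (R : rcfType) (G : finZmodType) (d : nat)
  (g : {ffun 'I_d.+1 -> G} -> R) : R :=
  \big[Num.max/0]_(S : {ffun 'I_d.+1 -> {set {ffun 'I_d -> G}}})
     `| avg (fun x : {ffun 'I_d.+1 -> G} =>
              g x * \prod_(j < d.+1) (face j x \in S j)%:R) |.

(* ||f||_{U^m}: the 2^m-th root (m-fold iterated square root) of
   E_{x,h_1..h_m} prod_{w in {0,1}^m} f(x + sum_i w_i h_i) *)
Definition gowers_U (R : rcfType) (G : finZmodType) (m : nat) (f : G -> R) : R :=
  iter m Num.sqrt
    (avg (fun p : G * {ffun 'I_m -> G} =>
       \prod_(w : {ffun 'I_m -> bool})
          f (p.1 + \sum_(i < m) (if w i then p.2 i else 0)))).

From HB Require Import structures.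
From mathcomp Require Import all_boot all_order all_algebra ring.
Import Order.TTheory GRing.Theory Num.Theory.
Local Open Scope ring_scope.
Set Implicit Arguments. Unset Strict Implicit.

(* Removing the edges of F one at a time telescopes
   t(F, Gamma_A) - delta^e(F) into e(F) terms E_x (A_e(x) - delta) prod_{e' in E'}
   A_e'(x) with e not in E' ([telescope]).  For such a term, choose d+1 private
   vertices sigma 0..d of e and average over the translates x + iota y, where
   iota y moves only the private vertices.  On each fibre A_e becomes
   Gamma^(d+1)_A(y), and grouping the other edges by a private vertex sigma J
   they miss turns the rest into a product of 0/1 functions w_J that ignore the
   coordinate J; such a correlation is at most the box norm ([fibre_bound],
   [box_norm_ge_indep], [edge_term_bound]).

   A correlation of f(y_0 + ... + y_d) with prod_j u_j(y),
   |u_j| <= 1 and u_j ignoring y_j, is bounded by d+1 Cauchy-Schwarz steps by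
   N_(d+1)(f)^(1/2^(d+1)) ([gowers_cauchy_schwarz]), where the recursively
   defined N_m(f) is the cube average defining ||f||_(U^m)^(2^m)
   ([gowers_recE]); face indicators are such u_j ([box_norm_le_gowers]). *)

Section Averages.
Variable R : rcfType.
Implicit Types T : finType.

Lemma avg_ext T (f g : T -> R) : f =1 g -> avg f = avg g.
Proof. by move=> fg; rewrite /avg (eq_bigr _ (fun x _ => fg x)). Qed.

Lemma avg_const T (x0 : T) (c : R) : avg (fun _ : T => c) = c.
Proof.
rewrite /avg sumr_const -[c *+ _]mulr_natr mulfK // pnatr_eq0 -lt0n.
by apply/card_gt0P; exists x0.
Qed.

Lemma avgD T (f g : T -> R) : avg (fun x => f x + g x) = avg f + avg g.
Proof. by rewrite /avg big_split mulrDl. Qed.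

Lemma avgMl T c (f : T -> R) : avg (fun x => c * f x) = c * avg f.
Proof. by rewrite /avg -mulr_sumr mulrA. Qed.

Lemma avg_le T (f g : T -> R) : (forall x, f x <= g x) -> avg f <= avg g.
Proof. by move=> fg; rewrite /avg ler_wpM2r ?invr_ge0 // ler_sum. Qed.

Lemma avg_norm T (f : T -> R) : `|avg f| <= avg (fun x => `|f x|).
Proof.
by rewrite /avg normrM normfV normr_nat ler_wpM2r ?invr_ge0 ?ler_norm_sum.
Qed.

Lemma avg_exch T1 T2 (F : T1 -> T2 -> R) :
  avg (fun x => avg (fun y => F x y)) = avg (fun y => avg (fun x => F x y)).
Proof. by rewrite /avg -!mulr_suml exchange_big /= -!mulrA [_^-1 * _]mulrC. Qed.

Lemma avg_pair T1 T2 (F : T1 * T2 -> R) :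
  avg F = avg (fun a => avg (fun b => F (a, b))).
Proof.
rewrite /avg -mulr_suml pair_big card_prod natrM invfM mulrA -mulrA.
by rewrite [_^-1 * _]mulrC mulrA; congr (_ * _ * _); apply: eq_bigr => -[].
Qed.

Lemma avg_mul T1 T2 (f : T1 -> R) (g : T2 -> R) :
  avg f * avg g = avg (fun a => avg (fun b => f a * g b)).
Proof. by rewrite mulrC -avgMl; apply: avg_ext => a; rewrite mulrC -avgMl. Qed.

Lemma avg_bij T (h : T -> T) (F : T -> R) :
  bijective h -> avg (fun x => F (h x)) = avg F.
Proof. by move=> bh; rewrite /avg [in RHS](reindex h) //; apply: onW_bij. Qed.

Lemma avg_shift (T : finZmodType) (F : T -> R) (z : T) :
  avg (fun y => F (y + z)) = avg F.
Proof. by apply: avg_bij; exists (fun y => y - z) => y; rewrite ?addrK ?subrK. Qed.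

Lemma avg_sq T (f : T -> R) : avg f ^+ 2 <= avg (fun x => f x ^+ 2).
Proof.
have [T0|/card_gt0P [x0 _]] := posnP #|T|.
  by rewrite /avg T0 invr0 !mulr0 expr0n.
set c := avg f.
have var_ge0 : 0 <= avg (fun x => (f x - c) ^+ 2).
  by rewrite /avg mulr_ge0 ?invr_ge0 ?sumr_ge0 // => x _; apply: sqr_ge0.
have varE : avg (fun x => (f x - c) ^+ 2) = avg (fun x => f x ^+ 2) - c ^+ 2.
  rewrite (avg_ext (g := fun x => f x ^+ 2 + (- 2 * c * f x + c ^+ 2))); last first.
    by move=> x; rewrite sqrrB; ring.
  by rewrite !avgD avgMl (avg_const x0) -/c; ring.
by rewrite -subr_ge0 -varE.
Qed.

Lemma avg_pow2 T m (f : T -> R) :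
  avg f ^+ (2 ^ m) <= avg (fun x => f x ^+ (2 ^ m)).
Proof.
elim: m f => [|m IH] f; first by rewrite !expr1.
have -> : avg (fun x => f x ^+ (2 ^ m.+1)) = avg (fun x => (f x ^+ 2) ^+ (2 ^ m)).
  by apply: avg_ext => x; rewrite expnS exprM.
rewrite expnS exprM; apply: le_trans (IH _).
apply: lerXn2r; rewrite ?nnegrE ?avg_sq ?sqr_ge0 //.
exact: le_trans (sqr_ge0 _) (avg_sq f).
Qed.

End Averages.

(* Finite functions into a finite abelian group form a finite abelian group,
   so that [avg_shift] also applies to the product groups G^I. *)
HB.instance Definition _ (I : finType) (G : finZmodType) :=
  GRing.Zmodule.on {ffun I -> G}.

Section Coordinates.
Variables (R : rcfType) (G : finZmodType).

Lemma avg_shift_avg (T : finZmodType) (T' : finType) (a0 : T') (F : T -> R)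
    (z : T' -> T) :
  avg F = avg (fun a => avg (fun y => F (y + z a))).
Proof.
by rewrite [RHS](avg_ext (g := fun=> avg F)) ?(avg_const a0) // => a; rewrite avg_shift.
Qed.

Lemma sum_ffunD (I : finType) (P : pred I) (x y : {ffun I -> G}) :
  \sum_(i | P i) (x + y) i = \sum_(i | P i) x i + \sum_(i | P i) y i.
Proof. by rewrite -big_split; apply: eq_bigr => i _; rewrite ffunE. Qed.

Definition single n (j : 'I_n) (a : G) : {ffun 'I_n -> G} :=
  [ffun i => if i == j then a else 0].

Lemma singleD n (j : 'I_n) a b : single j (a + b) = single j a + single j b.
Proof. by apply/ffunP => i; rewrite !ffunE; case: eqP; rewrite ?addr0. Qed.

Lemma sum_single n (j : 'I_n) a : \sum_i single j a i = a.
Proof.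
rewrite (bigD1 j) //= ffunE eqxx big1 ?addr0 // => i /negbTE ij.
by rewrite ffunE ij.
Qed.

Definition indep n (j : 'I_n) (u : {ffun 'I_n -> G} -> R) : Prop :=
  forall y a, u (y + single j a) = u y.

Lemma avg_sum_coords n (f : G -> R) :
  avg (fun y : {ffun 'I_n.+1 -> G} => f (\sum_i y i)) = avg f.
Proof.
rewrite (avg_shift_avg 0 _ (single ord0)) avg_exch.
rewrite (avg_ext (g := fun=> avg f)) ?(avg_const (0 : {ffun 'I_n.+1 -> G})) //.
move=> y; rewrite -(avg_shift f (\sum_i y i)); apply: avg_ext => a.
by rewrite sum_ffunD sum_single addrC.
Qed.

Lemma cauchy_schwarz_step n (j : 'I_n) (u F : {ffun 'I_n -> G} -> R) :
  indep j u -> (forall y, `|u y| <= 1) ->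
  avg (fun y => u y * F y) ^+ 2 <=
  avg (fun h : G => avg (fun y => F y * F (y + single j h))).
Proof.
move=> uj u_le1.
pose M y := avg (fun a : G => F (y + single j a)).
have uFE : avg (fun y => u y * F y) = avg (fun y => u y * M y).
  rewrite (avg_shift_avg 0 (fun y => u y * F y) (single j)) avg_exch.
  by apply: avg_ext => y; rewrite -avgMl; apply: avg_ext => a /=; rewrite uj.
have MsqE : avg (fun y => M y ^+ 2) =
            avg (fun h : G => avg (fun y => F y * F (y + single j h))).
  rewrite (avg_ext (g := fun y => avg (fun a : G => avg (fun b : G =>
              F (y + single j a) * F (y + single j b))))); last first.
    by move=> y; rewrite expr2 avg_mul.
  set X := fun h : G => _.
  rewrite avg_exch [LHS](avg_ext (g := fun=> avg X)) ?(avg_const (0 : G)) // => a.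
  rewrite avg_exch -(avg_shift X (- a)); apply: avg_ext => b.
  rewrite /X -[RHS](avg_shift _ (single j a)); apply: avg_ext => y /=.
  by rewrite -addrA -singleD [a + _]addrC subrK.
rewrite uFE -MsqE; apply: le_trans (avg_sq _) _; apply: avg_le => y.
rewrite exprMn ler_piMl ?sqr_ge0 // -real_normK ?num_real //.
by rewrite exprn_ile1 ?u_le1.
Qed.


End Coordinates.

Section GowersCauchySchwarz.
Variables (R : rcfType) (G : finZmodType).

(* The recursive form of ||f||_{U^m}^{2^m}:
   N_0 f = E f  and  N_{m+1} f = E_h N_m (x |-> f x * f (x + h)). *)
Fixpoint gowers_rec m (f : G -> R) : R :=
  if m is m'.+1 then avg (fun h : G => gowers_rec m' (fun x => f x * f (x + h)))
  else avg f.

Lemma gowers_cauchy_schwarz n m (f : G -> R)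
    (u : 'I_n.+1 -> {ffun 'I_n.+1 -> G} -> R) :
  (m <= n.+1)%N ->
  (forall j : 'I_n.+1, (j < m)%N -> indep j (u j) /\ forall y, `|u j y| <= 1) ->
  avg (fun y : {ffun 'I_n.+1 -> G} =>
         f (\sum_i y i) * \prod_(j : 'I_n.+1 | (j < m)%N) u j y) ^+ (2 ^ m)
    <= gowers_rec m f.
Proof.
elim: m f u => [|m IH] f u m_le u_ok.
  rewrite expr1 /= -(avg_sum_coords n) [leLHS](avg_ext (g := fun y : {ffun 'I_n.+1 -> G} => f (\sum_i y i))) //.
  by move=> y; rewrite [\prod_(_ | _) _]big_pred0 ?mulr1 // => j; rewrite ltn0.
pose jm : 'I_n.+1 := Ordinal m_le.
have [uj u_le1] := u_ok jm (ltnSn m).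
pose F (y : {ffun 'I_n.+1 -> G}) := f (\sum_i y i) * \prod_(j : 'I_n.+1 | (j < m)%N) u j y.
have splitE : avg (fun y : {ffun 'I_n.+1 -> G} => f (\sum_i y i) * \prod_(j : 'I_n.+1 | (j < m.+1)%N) u j y)
              = avg (fun y => u jm y * F y).
  apply: avg_ext => y; rewrite [\prod_(_ | _) _](bigD1 jm) //= mulrCA; congr (_ * (_ * _)).
  by apply: eq_bigl => j; rewrite -val_eqE /= ltnS leq_eqVlt; case: ltngtP.
(* After the step, E_y F(y) F(y + h e_m) is a correlation of the same shape
   for the function x |-> f x * f (x + h) and the factors u_j * u_j(. + h e_m). *)
have shapeE h : avg (fun y => F y * F (y + single jm h)) =
    avg (fun y : {ffun 'I_n.+1 -> G} => f (\sum_i y i) * f (\sum_i y i + h) *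
      \prod_(j : 'I_n.+1 | (j < m)%N) (u j y * u j (y + single jm h))).
  apply: avg_ext => y; rewrite /F sum_ffunD sum_single big_split /=.
  by rewrite -!mulrA; congr (_ * _); rewrite mulrCA.
rewrite splitE expnS exprM.
apply: le_trans (_ : avg (fun h : G => avg (fun y => F y * F (y + single jm h)))
                       ^+ (2 ^ m) <= _).
  apply: lerXn2r; rewrite ?nnegrE ?sqr_ge0 ?cauchy_schwarz_step //.
  exact: le_trans (sqr_ge0 _) (cauchy_schwarz_step F uj u_le1).
apply: le_trans (avg_pow2 _ _) _; apply: avg_le => h; rewrite shapeE.
apply: IH (ltnW m_le) _ => j /ltnW/u_ok [uj' uj'_le1]; split.
  by move=> y a; rewrite /= uj' addrAC uj'.
by move=> y; rewrite normrM mulr_ile1.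
Qed.

End GowersCauchySchwarz.

Section Cube.
Variable R : rcfType.

Definition fcons (T : finType) m (a : T) (h : {ffun 'I_m -> T}) :
    {ffun 'I_m.+1 -> T} :=
  [ffun i => if unlift ord0 i is Some j then h j else a].

Lemma fcons0 (T : finType) m (a : T) (h : {ffun 'I_m -> T}) : fcons a h ord0 = a.
Proof. by rewrite ffunE unlift_none. Qed.

Lemma fconsS (T : finType) m (a : T) (h : {ffun 'I_m -> T}) j :
  fcons a h (lift ord0 j) = h j.
Proof. by rewrite ffunE liftK. Qed.

Lemma big_fcons (S : Type) (idx : S) (op : Monoid.com_law idx) (T : finType) m
    (F : {ffun 'I_m.+1 -> T} -> S) :
  \big[op/idx]_H F H = \big[op/idx]_a \big[op/idx]_h F (fcons a h).
Proof.
rewrite pair_big /= (reindex (fun p : T * {ffun 'I_m -> T} => fcons p.1 p.2)) /=.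
  by apply: eq_bigr => -[a h].
apply: onW_bij.
exists (fun H : {ffun 'I_m.+1 -> T} => (H ord0, [ffun j => H (lift ord0 j)])).
  move=> [a h] /=; rewrite fcons0; congr (_, _); apply/ffunP => j.
  by rewrite ffunE fconsS.
move=> H; apply/ffunP => i; rewrite ffunE /=.
by case: unliftP => [j ->|->]; rewrite ?ffunE.
Qed.

Lemma avg_fcons (T : finType) m (F : {ffun 'I_m.+1 -> T} -> R) :
  avg F = avg (fun a => avg (fun h => F (fcons a h))).
Proof.
rewrite -(avg_pair (fun p : T * {ffun 'I_m -> T} => F (fcons p.1 p.2))).
rewrite /avg big_fcons pair_big card_prod !card_ffun !card_ord expnS.
by congr (_ / _); apply: eq_bigr => -[a h].
Qed.

Variable G : finZmodType.

Lemma gowers_recE m (f : G -> R) : gowers_rec m f =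
  avg (fun p : G * {ffun 'I_m -> G} => \prod_(w : {ffun 'I_m -> bool})
     f (p.1 + \sum_(i < m) (if w i then p.2 i else 0))).
Proof.
elim: m f => [|m IH] f /=.
  rewrite avg_pair; apply: avg_ext => x; symmetry.
  rewrite (avg_ext (g := fun _ => f x)) ?(avg_const [ffun i => 0]) // => h /=.
  under eq_bigr do rewrite big_ord0 addr0.
  by rewrite prodr_const card_ffun card_ord card_bool expn0 expr1.
under avg_ext do rewrite IH.
rewrite avg_exch [LHS]avg_pair [RHS]avg_pair; apply: avg_ext => x.
rewrite avg_fcons avg_exch; apply: avg_ext => a; apply: avg_ext => h /=.
rewrite big_fcons big_bool /= big_split /= mulrC.
congr (_ * _); apply: eq_bigr => w _; rewrite big_ord_recl !fcons0 /=.
  under [X in _ = f (_ + (_ + X))]eq_bigr do rewrite !fconsS.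
  by rewrite [a + _]addrC addrA.
rewrite add0r.
by under [X in _ = f (_ + X)]eq_bigr do rewrite !fconsS.
Qed.

End Cube.

Section BoxNorm.
Variables (R : rcfType) (G : finZmodType) (d : nat).
Local Notation Y := {ffun 'I_d.+1 -> G}.

Lemma box_norm_ge (g : Y -> R) (S : {ffun 'I_d.+1 -> {set {ffun 'I_d -> G}}}) :
  `|avg (fun y : Y => g y * \prod_(j < d.+1) (face j y \in S j)%:R)| <= box_norm g.
Proof. exact: le_bigmax. Qed.

Lemma face_indep (j : 'I_d.+1) (S : {set {ffun 'I_d -> G}}) :
  indep j (fun y : Y => ((face j y \in S)%:R : R)).
Proof.
move=> y a; congr ((_ \in S)%:R); apply/ffunP => i.
by rewrite !ffunE lift_eqF addr0.
Qed.

Definition unface (j : 'I_d.+1) (t : {ffun 'I_d -> G}) : Y :=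
  [ffun i => if unlift j i is Some k then t k else 0].

Lemma unface_face j (y : Y) : unface j (face j y) = y + single j (- y j).
Proof.
apply/ffunP => i; rewrite !ffunE.
by case: unliftP => [k ->|->]; rewrite ?ffunE ?lift_eqF ?addr0 ?eqxx ?subrr.
Qed.

(* The box norm dominates the correlation of g with any product of 0/1-valued
   functions w_J, each of which ignores coordinate J: such a w_J is the
   indicator of a set of faces. *)
Lemma box_norm_ge_indep (g : Y -> R) (w : 'I_d.+1 -> Y -> R) :
  (forall J, indep J (w J)) -> (forall J y, w J y = (w J y == 1)%:R) ->
  `|avg (fun y => g y * \prod_(J < d.+1) w J y)| <= box_norm g.
Proof.
move=> w_indep w01.
pose S := [ffun J => [set t | w J (unface J t) == 1]].
have wS J y : w J y = (face J y \in S J)%:R.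
  by rewrite ffunE inE unface_face w_indep -w01.
under avg_ext do under eq_bigr do rewrite wS.
exact: box_norm_ge.
Qed.

End BoxNorm.

Lemma iter_sqrt (R : rcfType) n (x N : R) :
  0 <= x -> x ^+ (2 ^ n) <= N -> x <= iter n Num.sqrt N.
Proof.
elim: n x => [|n IH] x x_ge0 xN; first by rewrite expr1 in xN.
have x2N : x ^+ 2 <= iter n Num.sqrt N by rewrite IH ?sqr_ge0 // -exprM -expnS.
by rewrite iterS -(ger0_norm x_ge0) -sqrtr_sqr ler_sqrt // (le_trans (sqr_ge0 _) x2N).
Qed.

Lemma box_norm_le_gowers (R : rcfType) (G : finZmodType) d (f : G -> R) :
  box_norm (fun y : {ffun 'I_d.+1 -> G} => f (\sum_i y i)) <= gowers_U d.+1 f.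
Proof.
rewrite /box_norm; apply: bigmax_le => [|S _]; first by rewrite /gowers_U iterS sqrtr_ge0.
apply: iter_sqrt; rewrite ?normr_ge0 // -gowers_recE expnS exprM.
rewrite real_normK ?num_real // -exprM -expnS.
have prodE y : \prod_(j < d.+1) ((face j y \in S j)%:R : R) =
                \prod_(j < d.+1 | (j < d.+1)%N) (face j y \in S j)%:R.
  by apply: eq_bigl => j; rewrite ltn_ord.
under avg_ext do rewrite prodE.
apply: gowers_cauchy_schwarz => // j _; split; first exact: face_indep.
by move=> y; rewrite normr_nat lern1 leq_b1.
Qed.

Lemma telescope (R : rcfType) (T I : finType) (x0 : T) (a : I -> T -> R)
    (c b : R) (E : {set I}) :
  0 <= c <= 1 ->
  (forall e (E' : {set I}), e \in E -> E' \subset E :\ e ->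
     `|avg (fun x => (a e x - c) * \prod_(e' in E') a e' x)| <= b) ->
  `|avg (fun x => \prod_(e in E) a e x) - c ^+ #|E| | <= #|E|%:R * b.
Proof.
move=> /andP [c_ge0 c_le1] term_le.
suff telescoped n (E' : {set I}) : #|E'| = n -> E' \subset E ->
    `|avg (fun x => \prod_(e in E') a e x) - c ^+ n| <= n%:R * b.
  exact: telescoped.
elim: n E' => [|n IH] E' cardE' subE.
  rewrite (cards0_eq cardE') (avg_ext (g := fun=> 1)) ?(avg_const x0) //.
    by rewrite subrr normr0 mul0r.
  by move=> x; rewrite big_set0.
have [e eE'] : exists e, e \in E' by apply/card_gt0P; rewrite cardE'.
have cardE'e : #|E' :\ e| = n by move: cardE'; rewrite (cardsD1 e) eE' add1n => -[].
have subEe : E' :\ e \subset E :\ e by apply: setSD.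
rewrite (avg_ext (g := fun x => (a e x - c) * \prod_(e' in E' :\ e) a e' x
                               + c * \prod_(e' in E' :\ e) a e' x)); last first.
  by move=> x; rewrite (big_setD1 e eE') /= mulrBl subrK.
rewrite avgD avgMl exprS -addrA -mulrBr.
apply: le_trans (ler_normD _ _) _.
rewrite [X in _ + X]normrM (ger0_norm c_ge0) -addn1 natrD mulrDl mul1r addrC.
apply: lerD; last exact: term_le (subsetP subE e eE') subEe.
apply: le_trans (IH _ cardE'e (subset_trans (subsetDl _ _) subE)).
by rewrite ler_piMl.
Qed.

Lemma density01 (R : rcfType) (G : finZmodType) (A : {set G}) :
  0 <= density R A <= 1.
Proof.
rewrite /density divr_ge0 //= ler_pdivrMr ?mul1r ?ler_nat ?max_card //.
by rewrite ltr0n; apply/card_gt0P; exists 0.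
Qed.

Section EdgeTerm.
Variables (R : rcfType) (G : finZmodType) (V : finType) (d : nat) (A : {set G}).
Local Notation X := {ffun V -> G}.
Local Notation Y := {ffun 'I_d.+1 -> G}.
Local Notation delta := (density R A).
Local Notation beta := (box_norm (fun y : Y => Gamma R A y - delta)).

Definition edge_ind (e : {set V}) (x : X) : R := ind R A (\sum_(v in e) x v).

Variables (sigma : 'I_d.+1 -> V) (e : {set V}) (E' : {set {set V}}).
Hypothesis sigma_e : forall j, sigma j \in e.
Hypothesis sigma_miss : forall e', e' \in E' -> exists j, sigma j \notin e'.

Definition iota (y : Y) : X := [ffun v => \sum_(j | sigma j == v) y j].

Lemma iotaD y y' : iota (y + y') = iota y + iota y'.
Proof.
by apply/ffunP => v; rewrite !ffunE -big_split; apply: eq_bigr => j _; rewrite ffunE.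
Qed.

Lemma sum_iota (e' : {set V}) y :
  \sum_(v in e') iota y v = \sum_(j | sigma j \in e') y j.
Proof.
rewrite [RHS](partition_big sigma (mem e')) //=.
apply: eq_bigr => v ve'; rewrite ffunE; apply: eq_bigl => j.
by case: eqP => [->|]; rewrite ?ve' ?andbF.
Qed.

Lemma edge_ind_fibre (x : X) y :
  \sum_(v in e) x v = 0 -> edge_ind e (x + iota y) = Gamma R A y.
Proof.
move=> x_e0; rewrite /edge_ind /Gamma sum_ffunD x_e0 add0r sum_iota.
by congr ind; apply: eq_bigl => j; rewrite sigma_e.
Qed.

Lemma edge_ind_indep (e' : {set V}) (J : 'I_d.+1) (x : X) :
  sigma J \notin e' -> indep J (fun y => edge_ind e' (x + iota y)).
Proof.
move=> Je' y a; rewrite /edge_ind iotaD addrA sum_ffunD [X in _ + X]sum_iota.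
rewrite [X in _ + X]big1 ?addr0 // => j je'; rewrite ffunE.
by case: eqP => // jJ; move: je'; rewrite jJ (negbTE Je').
Qed.

Lemma prod_indicators01 (I : finType) (P : pred I) (b : I -> bool) :
  let w := \prod_(i | P i) ((b i)%:R : R) in w = (w == 1)%:R.
Proof.
move=> w; have : (w == 0) || (w == 1).
  apply: (big_ind (fun v : R => (v == 0) || (v == 1))) => [|u v|i _].
  - by rewrite eqxx orbT.
  - by case/orP=> /eqP-> /orP[]/eqP->; rewrite ?mulr0 ?mul0r ?mulr1 eqxx ?orbT.
  - by case: (b i); rewrite eqxx ?orbT.
by case/orP => /eqP ->; rewrite ?eqxx // eq_sym oner_eq0.
Qed.

(* On a fibre through x with sum_{v in e} x_v = 0 the term of e is a box-norm
   correlation: group the other edges e' by the private vertex they miss. *)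
Lemma fibre_bound (x : X) : \sum_(v in e) x v = 0 ->
  `|avg (fun y => (edge_ind e (x + iota y) - delta) *
                  \prod_(e' in E') edge_ind e' (x + iota y))| <= beta.
Proof.
move=> x_e0.
pose miss (e' : {set V}) := odflt ord0 [pick j | sigma j \notin e'].
have missP e' : e' \in E' -> sigma (miss e') \notin e'.
  move=> e'E'; rewrite /miss; case: pickP => [j|none] //=.
  by have [j je'] := sigma_miss e'E'; move: (none j); rewrite je'.
pose w J y := \prod_(e' in E' | miss e' == J) edge_ind e' (x + iota y).
under avg_ext => y do rewrite edge_ind_fibre // (partition_big miss xpredT) //=.
apply: box_norm_ge_indep => [J y a|J y]; last exact: prod_indicators01.
apply: eq_bigr => e' /andP [e'E' /eqP <-].
exact: edge_ind_indep (missP e' e'E') y a.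
Qed.

(* Averaging the fibres over x: the term of e is bounded by the box norm. *)
Lemma edge_term_bound :
  `|avg (fun x => (edge_ind e x - delta) * \prod_(e' in E') edge_ind e' x)|
    <= beta.
Proof.
set H := fun x => _.
rewrite (avg_shift_avg 0 H iota) avg_exch.
apply: le_trans (avg_norm _) _.
rewrite -[leRHS](avg_const (0 : X)); apply: avg_le => x.
(* Translate y so that the fibre passes through a point with e-sum 0. *)
pose c := \sum_(v in e) x v.
rewrite -(avg_shift (fun y => H (x + iota y)) (single ord0 (- c))) /H.
under avg_ext do rewrite iotaD addrA addrAC.
apply: fibre_bound.
rewrite sum_ffunD sum_iota [X in _ + X](eq_bigl xpredT) ?sum_single ?subrr //.
Qed.

End EdgeTerm.

Lemma simple_witness (V : finType) s (E : {set {set V}}) (e : {set V}) :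
  simple s E -> e \in E ->
  exists sigma : 'I_s -> V, (forall j, sigma j \in e) /\
    forall e', e' \in E -> e' != e -> exists j, sigma j \notin e'.
Proof.
move=> simpleE eE; have [S [Se cardS S_private]] := simpleE e eE.
exists (fun j => enum_val (cast_ord (esym cardS) j)); split.
  by move=> j; apply: (subsetP Se); apply: enum_valP.
move=> e' e'E ne; have /subsetPn [v vS ve'] := S_private e' e'E ne.
by exists (cast_ord cardS (enum_rank_in vS v)); rewrite cast_ordK enum_rankK_in.
Qed.

Theorem mainTheorem5 (R : rcfType) (G : finZmodType) (k d : nat)
  (V : finType) (E : {set {set V}}) (A : {set G}) :
  (1 <= d)%N -> (d < k)%N -> uniform k E -> simple d.+1 E ->
  `| hom_density R E A - density R A ^+ #|E| |
     <= #|E|%:R * box_norm (fun x : {ffun 'I_d.+1 -> G} => Gamma R A x - density R A)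
  /\ #|E|%:R * box_norm (fun x : {ffun 'I_d.+1 -> G} => Gamma R A x - density R A)
     <= #|E|%:R * gowers_U d.+1 (fun g : G => ind R A g - density R A).
Proof.
move=> _ _ _ simpleE; split; last first.
  apply: ler_wpM2l; first exact: ler0n.
  exact: (@box_norm_le_gowers R G d (fun g : G => ind R A g - density R A)).
apply: (telescope (0 : {ffun V -> G}) (a := edge_ind R A) (density01 R A)) => e E' eE subE.
have [sigma [sigma_e sigma_miss]] := simple_witness simpleE eE.
apply: edge_term_bound sigma_e _ => e' e'E'.
by move: (subsetP subE e' e'E'); rewrite !inE => /andP [ne e'E]; apply: sigma_miss.
Qed.
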